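(* Let $\{B_j\}$ and $\{C_j\}$ be finite lists of operators on the fermionic Fock space on $n$ spin orbitals with the same cardinality, where each $B_j$ maps the $\eta$-electron subspace into the $\xi$-electron subspace and each $C_j$ is number-preserving. Then $$\max_{|\psi_\eta\rangle}\langle\psi_\eta|\sum_{j}B_j^\dagger C_j^\dagger C_jB_j|\psi_\eta\rangle\le\max_{|\psi_\eta\rangle}\langle\psi_\eta|\sum_{j}B_j^\dagger B_j|\psi_\eta\rangle\cdot\max_{k,\,|\phi_\xi\rangle}\langle\phi_\xi|C_k^\dagger C_k|\phi_\xi\rangle,$$ where $|\psi_\eta\rangle$ ranges over $\eta$-electron states and $|\phi_\xi\rangle$ over $\xi$-electron states. In terms of the fermionic seminorm, $$\Big\|\sum_{j}B_j^\dagger C_j^\dagger C_jB_j\Big\|_{\eta}\le\Big\|\sum_{j}B_j^\dagger B_j\Big\|_{\eta}\max_k\|C_k^\dagger C_k\|_{\xi}.$$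
   Context: Fermionic Fock space on $n$ spin orbitals: the $2^n$-dimensional Hilbert space with orthonormal basis $|c_0,\dots,c_{n-1}\rangle$, $c_j\in\{0,1\}$, with creation operators $A_j^\dagger|\dots,0_j,\dots\rangle=(-1)^{\sum_{k<j}c_k}|\dots,1_j,\dots\rangle$, $A_j^\dagger|\dots,1_j,\dots\rangle=0$, annihilation operators $A_j=(A_j^\dagger)^\dagger$, $N=\sum_jA_j^\dagger A_j$. An operator is number-preserving if it commutes with $N$. The $\eta$-electron subspace is the span of basis vectors with $\sum_jc_j=\eta$; $\eta$-electron states are unit vectors in it. For an operator $Y$, $\|Y\|_\eta=\max_{|\psi_\eta\rangle,|\phi_\eta\rangle}|\langle\phi_\eta|Y|\psi_\eta\rangle|$ over $\eta$-electron states. *)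

From HB Require Import structures.
From mathcomp Require Import all_boot all_order all_algebra.
From mathcomp Require Import reals complex.
Set Implicit Arguments. Unset Strict Implicit. Unset Printing Implicit Defensive.
Import Order.TTheory GRing.Theory Num.Theory.
Local Open Scope ring_scope.

(* Basis vector |c_0,...,c_{n-1}> of the Fock space on n spin orbitals is
   indexed by i : 'I_(2^n) with i = \sum_k c_k 2^k, i.e. c_k = bit k of i. *)
Definition occ (n : nat) (i : 'I_(2 ^ n)) (k : nat) : bool := odd (i %/ 2 ^ k).

Definition nelec (n : nat) (i : 'I_(2 ^ n)) : nat := (\sum_(k < n) occ i k)%N.

Definition adj (R : rcfType) (p q : nat) (A : 'M[R[i]]_(p, q)) : 'M[R[i]]_(q, p) :=
  (map_mx (@conjc R) A)^T.

(* creation operator A_j^dagger: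
   A_j^dag |..,0_j,..> = (-1)^(\sum_{k<j} c_k) |..,1_j,..>,  A_j^dag |..,1_j,..> = 0 *)
Definition creation (R : rcfType) (n : nat) (j : 'I_n) : 'M[R[i]]_(2 ^ n) :=
  \matrix_(a, b)
    if ~~ occ b j && (nat_of_ord a == b + 2 ^ j)%N
    then (-1) ^+ (\sum_(k < n | (k < j)%N) occ b k)%N else 0.

Definition annihilation (R : rcfType) (n : nat) (j : 'I_n) : 'M[R[i]]_(2 ^ n) :=
  adj (creation R j).

Definition numop (R : rcfType) (n : nat) : 'M[R[i]]_(2 ^ n) :=
  \sum_(j < n) (creation R j *m annihilation R j).

Definition number_preserving (R : rcfType) (n : nat) (Y : 'M[R[i]]_(2 ^ n)) : Prop :=
  Y *m numop R n = numop R n *m Y.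

Definition in_sector (R : rcfType) (n eta : nat) (v : 'cV[R[i]]_(2 ^ n)) : Prop :=
  forall i : 'I_(2 ^ n), nelec i != eta -> v i 0 = 0.

Definition state (R : rcfType) (n eta : nat) (v : 'cV[R[i]]_(2 ^ n)) : Prop :=
  in_sector eta v /\ adj v *m v = 1%:M.

(* expectation value <v|X|v> (real part; it is real for the Hermitian X used) *)
Definition expect (R : rcfType) (n : nat) (v : 'cV[R[i]]_(2 ^ n))
  (X : 'M[R[i]]_(2 ^ n)) : R := complex.Re ((adj v *m X *m v) 0 0).

Definition is_max (R : rcfType) (S : R -> Prop) (m : R) : Prop :=
  S m /\ forall x, S x -> x <= m.

From HB Require Import structures.
From mathcomp Require Import all_boot all_order all_algebra.
From mathcomp Require Import reals complex ring.
Set Implicit Arguments. Unset Strict Implicit. Unset Printing Implicit Defensive.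
Import Order.TTheory GRing.Theory Num.Theory.
Local Open Scope ring_scope.
Local Open Scope complex_scope.

(* Write |w|^2 for the squared norm.  By homogeneity, the bound M3 on
   xi-electron states gives |C_j w|^2 <= M3 |w|^2 for every w in the
   xi-electron subspace, in particular for w = B_j psi.  Hence
   <psi| sum_j B_j^+ C_j^+ C_j B_j |psi> = sum_j |C_j B_j psi|^2
   <= M3 sum_j |B_j psi|^2 = M3 <psi| sum_j B_j^+ B_j |psi> <= M3 M2. *)

Lemma adj_mulmx (R : rcfType) (p q r : nat) (X : 'M[R[i]]_(p, q)) (Y : 'M[R[i]]_(q, r)) :
  adj (X *m Y) = adj Y *m adj X.
Proof. by rewrite /adj map_mxM trmx_mul. Qed.

Lemma adjE (R : rcfType) (p q : nat) (A : 'M[R[i]]_(p, q)) a b : adj A a b = (A b a)^*.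
Proof. by rewrite !mxE. Qed.

Section SquaredNorm.
Variables (R : rcfType) (p : nat).
Implicit Types w : 'cV[R[i]]_p.

Definition sqnorm w : R := complex.Re ((adj w *m w) 0 0).

Lemma adj_mulmx_selfE w : (adj w *m w) 0 0 = \sum_k w k 0 * (w k 0)^*.
Proof. by rewrite mxE; apply: eq_bigr => k _; rewrite adjE mulrC. Qed.

Lemma adj_mulmx_self_ge0 w : 0 <= (adj w *m w) 0 0.
Proof. by rewrite adj_mulmx_selfE; apply: sumr_ge0 => k _; apply: mulcJ_ge0. Qed.

Lemma sqnormE w : (sqnorm w)%:C = (adj w *m w) 0 0.
Proof. exact/RRe_real/ger0_real/adj_mulmx_self_ge0. Qed.

Lemma sqnorm_ge0 w : 0 <= sqnorm w.
Proof. by rewrite -ler0c sqnormE adj_mulmx_self_ge0. Qed.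

Lemma sqnorm0 : sqnorm 0 = 0.
Proof. by rewrite /sqnorm mulmx0 mxE. Qed.

Lemma sqnorm_eq0 w : sqnorm w = 0 -> w = 0.
Proof.
move=> /(congr1 (fun x => x%:C)); rewrite sqnormE adj_mulmx_selfE => /eqP.
rewrite psumr_eq0 => [/allP w0|k _]; last exact: mulcJ_ge0.
apply/matrixP => k l; rewrite ord1 mxE.
by apply/eqP; move: (w0 k (mem_index_enum k)); rewrite mulf_eq0 conjc_eq0 orbb.
Qed.

Lemma sqnormZ (c : R) w : sqnorm (c%:C *: w) = c ^+ 2 * sqnorm w.
Proof.
apply: (@complexI R); rewrite rmorphM /= !sqnormE !adj_mulmx_selfE mulr_sumr.
apply: eq_bigr => k _; rewrite mxE.
by case: (w k 0) => x y; simpc; congr (_ +i* _); ring.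
Qed.

End SquaredNorm.

Lemma expect_adj_mulmx (R : rcfType) (n : nat) (v : 'cV[R[i]]_(2 ^ n))
  (X : 'M[R[i]]_(2 ^ n)) :
  expect v (adj X *m X) = sqnorm (X *m v).
Proof. by rewrite /expect /sqnorm adj_mulmx !mulmxA. Qed.

Lemma expect_sum (R : rcfType) (n m : nat) (v : 'cV[R[i]]_(2 ^ n)) (F : 'I_m -> 'M_(2 ^ n)) :
  expect v (\sum_j F j) = \sum_j expect v (F j).
Proof. by rewrite /expect mulmx_sumr mulmx_suml summxE raddf_sum. Qed.

Lemma sqnorm_mulmx_sector_le (R : rcfType) (n xi : nat) (X : 'M[R[i]]_(2 ^ n)) (M : R) v :
  (forall phi, state xi phi -> sqnorm (X *m phi) <= M) ->
  in_sector xi v -> sqnorm (X *m v) <= M * sqnorm v.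
Proof.
move=> X_le v_xi; have [v0 | v_neq0] := eqVneq (sqnorm v) 0.
  by rewrite v0 (sqnorm_eq0 v0) mulmx0 sqnorm0 mulr0.
have v_gt0 : 0 < sqnorm v by rewrite lt_def v_neq0 sqnorm_ge0.
pose u := (Num.sqrt (sqnorm v))^-1%:C *: v.
have sqr_inv : (Num.sqrt (sqnorm v))^-1 ^+ 2 = (sqnorm v)^-1.
  by rewrite exprVn sqr_sqrtr // ltW.
have u_state : state xi u.
  split; first by move=> a /v_xi v_a; rewrite mxE v_a mulr0.
  by apply/matrixP => a b; rewrite !ord1 -sqnormE sqnormZ sqr_inv mulVf // mxE.
have := X_le u u_state; rewrite -scalemxAr sqnormZ sqr_inv.
by rewrite ler_pdivrMl // mulrC.
Qed.

Local Close Scope complex_scope.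

Theorem lemma3 (R : realType) (n eta xi m : nat)
  (B C : 'I_m -> 'M[R[i]]_(2 ^ n)) :
  (forall (j : 'I_m) (v : 'cV[R[i]]_(2 ^ n)),
      in_sector eta v -> in_sector xi (B j *m v)) ->
  (forall j : 'I_m, number_preserving (C j)) ->
  forall M1 M2 M3 : R,
  is_max (fun x => exists psi, state eta psi /\
            x = expect psi (\sum_(j < m) (adj (B j) *m adj (C j) *m C j *m B j))) M1 ->
  is_max (fun x => exists psi, state eta psi /\
            x = expect psi (\sum_(j < m) (adj (B j) *m B j))) M2 ->
  is_max (fun x => exists (k : 'I_m) phi, state xi phi /\
            x = expect phi (adj (C k) *m C k)) M3 ->
  M1 <= M2 * M3.
Proof.
move=> B_sector _ M1 M2 M3 [[psi [psi_state ->]] _] [_ M2_max].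
move=> [[k [phi [phi_state M3E]]] M3_max].
have M3_ge0 : 0 <= M3 by rewrite M3E expect_adj_mulmx sqnorm_ge0.
have C_le j w : in_sector xi w -> sqnorm (C j *m w) <= M3 * sqnorm w.
  apply: sqnorm_mulmx_sector_le => phi' phi'_state.
  by rewrite -expect_adj_mulmx; apply: M3_max; exists j, phi'.
have BpsiE j : adj (B j) *m adj (C j) *m C j *m B j = adj (C j *m B j) *m (C j *m B j).
  by rewrite adj_mulmx !mulmxA.
rewrite expect_sum; apply: (@le_trans _ _ (\sum_j M3 * sqnorm (B j *m psi))).
  apply: ler_sum => j _; rewrite BpsiE expect_adj_mulmx -mulmxA.
  exact/C_le/B_sector/psi_state.1.
rewrite -mulr_sumr mulrC ler_wpM2r // M2_max //; exists psi; split => //.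
by rewrite expect_sum; apply: eq_bigr => j _; rewrite expect_adj_mulmx.
Qed.
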